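(* Let $k$ be a field of characteristic $0$, $K = k(x)$, and let $P, Q \in k[x]$ be separable polynomials of degree $\geq 1$ such that: (i) $P$ and $Q$ have no common roots; (ii) $P(0)\neq 0$ and $Q(0)\neq 0$; (iii) there is a root $x_1 \in k$ of $P$ with $x_1 Q(x_1) \in k^{\times 2}$ and a root $x_2 \in k$ of $Q$ with $x_2 P(x_2) \in k^{\times 2}$. Let $X$ be the smooth projective curve over $k$ with function field $L = K(\sqrt{xP(x)}, \sqrt{xQ(x)})$. Then $X$ admits a faithful action of $G = (\mathbb{Z}/2\mathbb{Z})^2 = \langle e_1, e_2\rangle$ by $k$-automorphisms (namely $e_1$ negates $\sqrt{xP(x)}$ and fixes $\sqrt{xQ(x)}$, $e_2$ fixes $\sqrt{xP(x)}$ and negates $\sqrt{xQ(x)}$, both fixing $x$) such that every element of $G$ fixes at least one geometric point of $X$.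
   Context: Characteristic of $k$ is $0$. A curve means a geometrically irreducible smooth projective $1$-dimensional $k$-variety; a geometric point is a point of $X(\overline{k})$. *)

From HB Require Import structures.
From mathcomp Require Import all_boot all_order all_algebra all_field.
Set Implicit Arguments. Unset Strict Implicit. Unset Printing Implicit Defensive.
Import GRing.Theory.
Local Open Scope ring_scope.

(* A place of the function field L/k (k embedded in L via iota): a valuation
   ring O of L containing iota(k), O <> L.  For a smooth projective curve X
   over k with function field L, the closed points of X are in bijection
   with such places. *)
Definition is_place (k L : fieldType) (iota : k -> L) (O : L -> Prop) : Prop :=
  [/\ (forall c : k, O (iota c)),
      (forall a b, O a -> O b -> O (a - b)),
      (forall a b, O a -> O b -> O (a * b)),
      (forall a : L, O a \/ O a^-1)
    & (exists a : L, ~ O a)].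

Definition place_max (L : fieldType) (O : L -> Prop) (a : L) : Prop :=
  O a /\ (a = 0 \/ ~ O a^-1).

(* The automorphism sigma of L fixes a geometric point (a point of X(kbar))
   lying over the place O: a geometric point is a pair (O, phi) with phi a
   k-embedding of the residue field of O into kbar, and sigma sends it to
   (sigma O, phi o sigma^-1); it is fixed iff sigma O = O and sigma acts
   trivially on the residue field of O. *)
Definition fixes_geometric_point (k L : fieldType) (iota : k -> L)
    (sigma : L -> L) : Prop :=
  exists O : L -> Prop,
    [/\ is_place iota O,
        (forall a, O (sigma a) <-> O a)
      & (forall a, O a -> place_max O (sigma a - a))].

From HB Require Import structures.
From mathcomp Require Import all_boot all_order all_algebra all_field.
From mathcomp Require Import ring.
From Stdlib Require Import Classical ClassicalEpsilon.
Set Implicit Arguments. Unset Strict Implicit. Unset Printing Implicit Defensive.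
Import GRing.Theory.
Local Open Scope ring_scope.

(* Over K = k(t), L = K(u, v) is biquadratic: every element of L is
   (a + b u + c v + d u v) / e with a, b, c, d, e in k[t], uniquely up to scaling,
   because the norm of a + b u + c v + d u v down to K vanishes only when
   a = b = c = d = 0.  Changing the signs of b, c, d accordingly gives the four
   automorphisms.  Each nontrivial one, sigma, fixes a subfield F = k(t, w) with
   w ^+ 2 = W, and L = F(z) with z ^+ 2 = (t - r) H where H(r) W(r) != 0: for e1,
   z = u, w = v, r = x1; for e2, z = v, w = u, r = x2; for e1 e2, z = u,
   w = u v / t, r = 0.  At a place of F above t = r, t - r is a uniformizer and H a
   unit, so L/F is totally ramified there: the valuation ring O[z] of L above it is
   sigma-stable and sigma y - y lies in its maximal ideal for all y in O[z], i.e.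
   sigma fixes a geometric point. *)

Lemma sqr_eq_XsubC_mul_sqr (K : fieldType) (r : K) (R X Y : {poly K}) :
  R.[r] != 0 -> X ^+ 2 = ('X - r%:P) * R * Y ^+ 2 -> X = 0 /\ Y = 0.
Proof.
(* Descent: r is a root of X, hence of Y, and dividing out t - r gives a smaller
   solution. *)
move=> Rr; elim: {Y}(size Y).+1 {-2}Y (ltnSn (size Y)) X => // n IHn Y ltYn X eqXY.
have Xr0 : 'X - r%:P != 0 :> {poly K} by rewrite polyXsubC_eq0.
have [Y0|Y0] := eqVneq Y 0.
  by move: eqXY; rewrite Y0 [0 ^+ 2]expr2 mul0r mulr0 => /eqP; rewrite sqrf_eq0 => /eqP.
exfalso.
have /factor_theorem [X1 defX] : root X r.
  have := congr1 (horner^~ r) eqXY.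
  by rewrite /= !(hornerM, horner_exp) hornerXsubC subrr !mul0r => /eqP; rewrite sqrf_eq0.
have eqX1Y : X1 ^+ 2 * ('X - r%:P) = R * Y ^+ 2.
  by apply: (mulfI Xr0); rewrite [RHS]mulrA -eqXY defX; ring.
have /factor_theorem [Y1 defY] : root Y r.
  have := congr1 (horner^~ r) eqX1Y.
  rewrite /= !(hornerM, horner_exp) hornerXsubC subrr mulr0 => /esym/eqP.
  by rewrite mulf_eq0 (negbTE Rr) sqrf_eq0.
have Y10 : Y1 != 0 by apply: contraNneq Y0; rewrite defY => ->; rewrite mul0r.
have eqX1Y1 : X1 ^+ 2 = ('X - r%:P) * R * Y1 ^+ 2.
  by apply: (mulIf Xr0); rewrite eqX1Y defY; ring.
have ltY1n : (size Y1 < n)%N.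
  by move: ltYn; rewrite defY size_mul ?polyXsubC_eq0 // size_XsubC addn2.
by have [_ /eqP] := IHn Y1 ltY1n X1 eqX1Y1; rewrite (negbTE Y10).
Qed.

Lemma separable_root_factor (K : fieldType) (p : {poly K}) (x : K) :
  separable_poly p -> root p x -> exists2 q, p = q * ('X - x%:P) & q.[x] != 0.
Proof.
move=> sep_p /factor_theorem[q def_p]; exists q => //.
by move: sep_p; rewrite def_p separable_root => /andP[].
Qed.

Section BiquadraticNorm.

Variables (k : fieldType) (P Q : {poly k}) (r : k).
Hypotheses (two_neq0 : 2%:R != 0 :> k) (P0 : P.[0] != 0) (Q0 : Q.[0] != 0).
Hypotheses (sepP : separable_poly P) (rootP : root P r) (Qr : Q.[r] != 0).

(* With u ^+ 2 = t P and v ^+ 2 = t Q, the norm of a + b u + c v + d u v down to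
   k(t, u) is [biquad_normA] + [biquad_normB] u, and [biquad_norm] is its norm
   down to k(t). *)
Definition biquad_normA (a b c d : {poly k}) :=
  a ^+ 2 + b ^+ 2 * ('X * P) - c ^+ 2 * ('X * Q) - d ^+ 2 * ('X * P) * ('X * Q).
Definition biquad_normB (a b c d : {poly k}) :=
  2%:R * a * b - 2%:R * c * d * ('X * Q).
Definition biquad_norm (a b c d : {poly k}) :=
  biquad_normA a b c d ^+ 2 - biquad_normB a b c d ^+ 2 * ('X * P).

Let sqr_eq_X_mul_sqr (S X Y : {poly k}) :
  S.[0] != 0 -> X ^+ 2 = ('X * S) * Y ^+ 2 -> X = 0 /\ Y = 0.
Proof. by move=> S0 eqXY; apply: (sqr_eq_XsubC_mul_sqr S0); rewrite subr0 eqXY. Qed.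

Let sqr_eq_PQ_mul_sqr (X Y : {poly k}) : X ^+ 2 = (P * Q) * Y ^+ 2 -> X = 0 /\ Y = 0.
Proof.
have [P1 defP P1r] := separable_root_factor sepP rootP.
have P1Qr : (P1 * Q).[r] != 0 by rewrite hornerM mulf_neq0.
by move=> eqXY; apply: (sqr_eq_XsubC_mul_sqr P1Qr); rewrite eqXY defP; ring.
Qed.

Let mul2I : injective (fun x : {poly k} => 2%:R * x).
Proof. by apply: mulfI; rewrite -polyC_natr polyC_eq0. Qed.

Let XP_neq0 : 'X * P != 0.
Proof. by rewrite mulf_neq0 ?polyX_eq0 //; apply: contraNneq P0 => ->; rewrite horner0. Qed.

Lemma biquad_norm_eq0 a b c d :
  biquad_norm a b c d = 0 -> [/\ a = 0, b = 0, c = 0 & d = 0].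
Proof.
move=> /eqP; rewrite subr_eq0 mulrC => /eqP /(sqr_eq_X_mul_sqr P0) [normA0 normB0].
(* normA0 and normB0 say (a + b u) ^+ 2 = t Q (c + d u) ^+ 2; taking norms down to
   k(t) gives the identity of squares below. *)
have eq_ab_cd : a * b = c * d * ('X * Q).
  by apply: mul2I; apply/eqP; rewrite -subr_eq0 -normB0 /biquad_normB; apply/eqP; ring.
have eq_sum : a ^+ 2 + b ^+ 2 * ('X * P) = ('X * Q) * (c ^+ 2 + d ^+ 2 * ('X * P)).
  by apply/eqP; rewrite -subr_eq0 -normA0 /biquad_normA; apply/eqP; ring.
have /eqP : (a ^+ 2 - b ^+ 2 * ('X * P)) ^+ 2 = (('X * Q) * (c ^+ 2 - d ^+ 2 * ('X * P))) ^+ 2.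
  transitivity ((a ^+ 2 + b ^+ 2 * ('X * P)) ^+ 2 - 4%:R * (a * b) ^+ 2 * ('X * P)).
    by ring.
  by rewrite eq_sum eq_ab_cd; ring.
have twice_a2 : 2%:R * a ^+ 2 = (a ^+ 2 + b ^+ 2 * ('X * P)) + (a ^+ 2 - b ^+ 2 * ('X * P)).
  by ring.
rewrite eqf_sqr => /orP[] /eqP eq_diff.
- have /(sqr_eq_X_mul_sqr Q0) [a0 c0] : a ^+ 2 = ('X * Q) * c ^+ 2.
    by apply: mul2I; rewrite /= twice_a2 eq_sum eq_diff; ring.
  have /(sqr_eq_X_mul_sqr Q0) [b0 d0] : b ^+ 2 = ('X * Q) * d ^+ 2.
    apply: (mulIf XP_neq0); move: eq_sum; rewrite a0 c0 => eq_sum.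
    by transitivity (0 ^+ 2 + b ^+ 2 * ('X * P)); [ring | rewrite eq_sum; ring].
  by [].
- have /sqr_eq_PQ_mul_sqr [a0 /eqP] : a ^+ 2 = (P * Q) * ('X * d) ^+ 2.
    by apply: mul2I; rewrite /= twice_a2 eq_sum eq_diff; ring.
  rewrite mulf_eq0 polyX_eq0 => /eqP d0.
  have /sqr_eq_PQ_mul_sqr [/eqP bP0 c0] : (b * P) ^+ 2 = (P * Q) * c ^+ 2.
    apply: (mulIf XP_neq0); move: eq_sum; rewrite a0 d0 => eq_sum.
    by transitivity ((0 ^+ 2 + b ^+ 2 * ('X * P)) * P ^+ 2); [ring | rewrite eq_sum; ring].
  have P_neq0 : P != 0 by apply: contraNneq P0 => ->; rewrite horner0.
  by move: bP0; rewrite mulf_eq0 (negbTE P_neq0) orbF => /eqP.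
Qed.

End BiquadraticNorm.

Lemma fixes_geometric_point_id (k L : fieldType) (iota : k -> L) (sigma : L -> L) :
  fixes_geometric_point iota sigma -> fixes_geometric_point iota id.
Proof.
case=> O [placeO _ _]; exists O; split=> // a Oa.
have [O_const O_sub _ _ _] := placeO.
have O0 : O 0 by rewrite -(subrr (iota 0)); apply: O_sub.
by rewrite subrr; split; last left.
Qed.

(* O is a discrete valuation ring of the subfield F = inF of L with uniformizer pi,
   and L = F(w) with w ^+ 2 = pi h for a unit h of O.  Then O[w] is a valuation
   ring of L, and since sigma z - z lies in w O[w] the conjugation sigma acts
   trivially on its residue field. *)
Section RamifiedQuadraticExtension.

Variables (k L : fieldType) (iota : {rmorphism k -> L}).
Variables (inF O : L -> Prop) (pi h w : L) (sigma : L -> L).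
Hypotheses (inF_sub : forall a b, inF a -> inF b -> inF (a - b))
  (inF_mul : forall a b, inF a -> inF b -> inF (a * b))
  (inF_inv : forall a, inF a -> inF a^-1).
Hypotheses (O_inF : forall a, O a -> inF a) (O_const : forall c, O (iota c))
  (O_sub : forall a b, O a -> O b -> O (a - b))
  (O_mul : forall a b, O a -> O b -> O (a * b)).
Hypotheses (O_pi : O pi) (O_pi_inv : ~ O pi^-1).
Hypothesis uniformizer : forall z, inF z -> z != 0 ->
  (O z /\ O z^-1) \/ O (z / pi) \/ O (z^-1 / pi).
Hypotheses (O_h : O h) (O_h_inv : O h^-1) (h_neq0 : h != 0).
Hypothesis w_sqr : w ^+ 2 = pi * h.
Hypothesis decomp : forall z, exists a b, [/\ inF a, inF b & z = a + b * w].
Hypothesis decomp_uniq : forall a b, inF a -> inF b -> a + b * w = 0 -> a = 0 /\ b = 0.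
Hypothesis sigma_conj : forall a b, inF a -> inF b -> sigma (a + b * w) = a - b * w.

Definition Ow z := exists a b, [/\ O a, O b & z = a + b * w].

Let O0 : O 0. Proof. by rewrite -(subrr pi); apply: O_sub. Qed.
Let O1 : O 1. Proof. by rewrite -(rmorph1 iota). Qed.
Let ON a : O a -> O (- a). Proof. by rewrite -sub0r; apply: O_sub. Qed.
Let OD a b : O a -> O b -> O (a + b).
Proof. by move=> Oa Ob; rewrite -[b]opprK; apply/O_sub/ON. Qed.
Let inF0 : inF 0. Proof. exact: O_inF O0. Qed.

Let pi_neq0 : pi != 0.
Proof. by apply: contra_not_neq O_pi_inv => ->; rewrite invr0. Qed.

Let w_neq0 : w != 0.
Proof. by rewrite -sqrf_eq0 w_sqr mulf_neq0. Qed.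

Let invw : w^-1 = h^-1 / pi * w.
Proof.
apply: (mulfI w_neq0); rewrite mulfV // mulrCA -expr2 w_sqr.
by field; rewrite h_neq0 pi_neq0.
Qed.

Lemma O_or_inv z : inF z -> O z \/ O z^-1.
Proof.
have [->|z0 Fz] := eqVneq z 0; first by left.
case: (uniformizer Fz z0) => [[Oz _]|[Oz|Oz]]; [by left | left | right].
  by rewrite -(divfK pi_neq0 z); apply: O_mul.
by rewrite -(divfK pi_neq0 z^-1); apply: O_mul.
Qed.

Lemma unit_add_pi_mul e y :
  e != 0 -> O e -> O e^-1 -> O y -> e + pi * y != 0 /\ O (e + pi * y)^-1.
Proof.
move=> e_neq0 Oe Oe' Oy.
have x_neq0 : e + pi * y != 0.
  apply: contra_not_neq O_pi_inv => /(canRL (addrK _)); rewrite sub0r => defe.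
  have -> : pi^-1 = - y * e^-1 by rewrite defe; field; rewrite -defe e_neq0 pi_neq0.
  by apply: O_mul => //; apply: ON.
split=> //; have Fx : inF (e + pi * y) by apply/O_inF/OD/O_mul.
case: (uniformizer Fx x_neq0) => [[//]|[] Ox].
  (* the residue of e + pi y is that of the unit e *)
  case: O_pi_inv; have -> : pi^-1 = ((e + pi * y) / pi - y) * e^-1.
    by field; rewrite e_neq0 pi_neq0.
  by apply: O_mul => //; apply: O_sub.
by rewrite -(divfK pi_neq0 (e + pi * y)^-1); apply: O_mul.
Qed.

Lemma Ow_O a : O a -> Ow a.
Proof. by move=> Oa; exists a, 0; rewrite mul0r addr0. Qed.

Lemma Ow_mulw b : O b -> Ow (b * w).
Proof. by move=> Ob; exists 0, b; rewrite add0r. Qed.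

Lemma Ow_sub x y : Ow x -> Ow y -> Ow (x - y).
Proof.
move=> [a [b [Oa Ob ->]]] [a' [b' [Oa' Ob' ->]]].
by exists (a - a'), (b - b'); split; [apply: O_sub | apply: O_sub | ring].
Qed.

Lemma Ow_mul x y : Ow x -> Ow y -> Ow (x * y).
Proof.
move=> [a [b [Oa Ob ->]]] [a' [b' [Oa' Ob' ->]]].
exists (a * a' + b * b' * (pi * h)), (a * b' + a' * b); split.
- by apply: OD; do !apply: O_mul.
- by apply: OD; apply: O_mul.
- by rewrite -w_sqr; ring.
Qed.

Lemma Ow_unit e b :
  e != 0 -> O e -> O e^-1 -> O b -> Ow (e + b * w) /\ Ow (e + b * w)^-1.
Proof.
move=> e_neq0 Oe Oe' Ob; split; first by exists e, b.
have Oee' : O (e * e)^-1 by rewrite invfM; apply: O_mul.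
have [N_neq0 ON'] := unit_add_pi_mul (mulf_neq0 e_neq0 e_neq0) (O_mul Oe Oe) Oee'
  (ON (O_mul (O_mul Ob Ob) O_h)).
set N := e * e + _ in N_neq0 ON'.
have defN : (e + b * w) * (e - b * w) = N.
  by transitivity (e * e - b * b * w ^+ 2); [ring | rewrite w_sqr /N; ring].
have [x_neq0 x'_neq0] : e + b * w != 0 /\ e - b * w != 0.
  by apply/andP; rewrite -negb_or -mulf_eq0 defN.
have -> : (e + b * w)^-1 = e * N^-1 + (- b * N^-1) * w.
  by rewrite -defN; field; rewrite x_neq0 x'_neq0.
by exists (e * N^-1), (- b * N^-1); split=> //; apply: O_mul => //; apply: ON.
Qed.

Lemma Ow_coord a b : inF a -> inF b -> Ow (a + b * w) <-> O a /\ O b.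
Proof.
move=> Fa Fb; split=> [[a' [b' [Oa' Ob' eqz]]] | [Oa Ob]]; last by exists a, b.
have [] := decomp_uniq (inF_sub Fa (O_inF Oa')) (inF_sub Fb (O_inF Ob')).
  by transitivity ((a + b * w) - (a' + b' * w)); [ring | rewrite eqz subrr].
by move=> /subr0_eq-> /subr0_eq->.
Qed.

Lemma pi_inv_notin_Ow : ~ Ow pi^-1.
Proof.
have Fpi' : inF pi^-1 by apply/inF_inv/O_inF.
by have := Ow_coord Fpi' inF0; rewrite mul0r addr0 => -> [].
Qed.

Lemma Ow_or_inv z : Ow z \/ Ow z^-1.
Proof.
pose val x := Ow x \/ Ow x^-1.
have valF a : inF a -> val a by case/O_or_inv=> Oa; [left | right]; apply: Ow_O.
have val_mulw b : inF b -> val (b * w).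
  have [-> _|b0 Fb] := eqVneq b 0; first by left; rewrite mul0r; apply: Ow_O.
  case: (uniformizer Fb b0) => [[Ob _]|[Ob|Ob']]; [left | left | right].
  - exact: Ow_mulw.
  - by apply: Ow_mulw; rewrite -(divfK pi_neq0 b); apply: O_mul.
  - have -> : (b * w)^-1 = (b^-1 / pi * h^-1) * w by rewrite invfM invw; ring.
    exact/Ow_mulw/O_mul.
have val_mul_unit x y : val x -> Ow y /\ Ow y^-1 -> val (x * y).
  by move=> [Ox|Ox'] [Oy Oy']; [left | right; rewrite invfM mulrC]; apply: Ow_mul.
have [a [b [Fa Fb ->]]] := decomp z.
have [-> |b0] := eqVneq b 0; first by rewrite mul0r addr0; apply: valF.
have [-> |a0] := eqVneq a 0; first by rewrite add0r; apply: val_mulw.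
have Fc : inF (a / b) by apply/inF_mul/inF_inv.
have c0 : a / b != 0 by rewrite mulf_neq0 ?invr_eq0.
case: (uniformizer Fc c0) => [[Oc Oc']|[Oc|Oc']].
- have -> : a + b * w = b * (a / b + 1 * w) by field.
  by apply: val_mul_unit; [exact: valF | exact: Ow_unit].
- have -> : a + b * w = (b * w) * (1 + (a / b / pi * h^-1) * w).
    rewrite mulrDr mulr1 mulrCA -!mulrA -expr2 w_sqr.
    by field; rewrite b0 pi_neq0 h_neq0.
  by apply/val_mul_unit/Ow_unit; rewrite ?oner_neq0 ?invr1 //; [apply: val_mulw | apply: O_mul].
- have -> : a + b * w = a * (1 + (a / b)^-1 * w) by field; rewrite a0 b0.
  apply/val_mul_unit/Ow_unit; rewrite ?oner_neq0 ?invr1 //; first exact: valF.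
  by rewrite -(divfK pi_neq0 (a / b)^-1); apply: O_mul.
Qed.

Lemma Ow_sigma z : Ow (sigma z) <-> Ow z.
Proof.
have [a [b [Fa Fb ->]]] := decomp z.
have FNb : inF (- b) by rewrite -sub0r; apply: inF_sub.
rewrite sigma_conj // -mulNr (Ow_coord Fa FNb) (Ow_coord Fa Fb).
by split=> -[Oa Ob]; split=> //; [rewrite -[b]opprK |]; apply: ON.
Qed.

Lemma sigma_sub_max z : Ow z -> place_max Ow (sigma z - z).
Proof.
move=> [a [b [Oa Ob ->]]]; rewrite sigma_conj; try exact: O_inF.
have -> : a - b * w - (a + b * w) = - (b + b) * w by ring.
set g := - (b + b); have Og : O g by apply/ON/OD.
split; first exact: Ow_mulw.
have [->|g0] := eqVneq g 0; first by left; rewrite mul0r.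
right; have Fpih : inF (g * pi * h) by apply/O_inF; do !apply: O_mul.
have -> : (g * w)^-1 = 0 + (g * pi * h)^-1 * w.
  by rewrite add0r !invfM invw; ring.
move/(Ow_coord inF0 (inF_inv Fpih)) => [_ Oinv]; apply: O_pi_inv.
have -> : pi^-1 = g * h * (g * pi * h)^-1 by rewrite [g * pi * h]mulrAC invfM mulVKf // mulf_neq0.
by do !apply: O_mul.
Qed.

Theorem ramified_quadratic_fixes_geometric_point : fixes_geometric_point iota sigma.
Proof.
exists Ow; split; last exact: sigma_sub_max; last exact: Ow_sigma.
split; [by move=> c; apply: Ow_O | exact: Ow_sub | exact: Ow_mul | exact: Ow_or_inv |].
by exists pi^-1; apply: pi_inv_notin_Ow.
Qed.

End RamifiedQuadraticExtension.

Definition evt (k L : fieldType) (iota : {rmorphism k -> L}) (t : L) :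
  {rmorphism {poly k} -> L} := horner_morph (fun c => mulrC t (iota c)).

Lemma evtC (k L : fieldType) (iota : {rmorphism k -> L}) t c : evt iota t c%:P = iota c.
Proof. exact: horner_morphC. Qed.

Lemma evtX (k L : fieldType) (iota : {rmorphism k -> L}) t : evt iota t 'X = t.
Proof. exact: horner_morphX. Qed.

Lemma rmorph_evt (k L : fieldType) (iota : {rmorphism k -> L}) t (f : {rmorphism L -> L}) :
  (forall c, f (iota c) = iota c) -> f t = t -> forall p, f (evt iota t p) = evt iota t p.
Proof.
move=> f_iota f_t p; change (f (map_poly iota p).[t] = (map_poly iota p).[t]).
by rewrite -horner_map f_t -map_poly_comp; congr (_.[_]); apply: eq_map_poly.
Qed.

Section QuadraticPlace.

Variables (k L : fieldType) (iota : {rmorphism k -> L}) (t w : L) (W : {poly k}) (r : k).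
Local Notation E := (evt iota t).
Hypothesis E_neq0 : forall p, p != 0 -> E p != 0.
Hypothesis w_sqr : w ^+ 2 = E W.
Hypothesis E_indep : forall a b, E a + E b * w = 0 -> a = 0 /\ b = 0.

Definition ev2 a b := E a + E b * w.
Definition inF z := exists a b c, c != 0 /\ z = ev2 a b / E c.
Local Notation pir := (E ('X - r%:P)).

Lemma ev2M a b a' b' : ev2 a b * ev2 a' b' = ev2 (a * a' + b * b' * W) (a * b' + a' * b).
Proof. by rewrite /ev2 !rmorphD !rmorphM -w_sqr; ring. Qed.

Lemma ev2B a b a' b' : ev2 (a - a') (b - b') = ev2 a b - ev2 a' b'.
Proof. by rewrite /ev2 !rmorphB; ring. Qed.

Lemma ev2_norm a b : ev2 a b * ev2 a (- b) = E (a ^+ 2 - b ^+ 2 * W).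
Proof. by rewrite /ev2 !rmorphB !rmorphM -w_sqr; ring. Qed.

Lemma ev2C c : ev2 c 0 = E c.
Proof. by rewrite /ev2 rmorph0 mul0r addr0. Qed.

Lemma ev2_eq0 a b : ev2 a b = 0 -> a = 0 /\ b = 0.
Proof. exact: E_indep. Qed.

Lemma ev2_neq0 a b : ~~ (root a r && root b r) -> ev2 a b != 0.
Proof. by apply: contraNneq => /ev2_eq0[-> ->]; rewrite /root horner0 eqxx. Qed.

Lemma ev2_inj a b a' b' : ev2 a b = ev2 a' b' -> a = a' /\ b = b'.
Proof.
move=> eq_ev2; have /E_indep[] : E (a - a') + E (b - b') * w = 0.
  by rewrite -[LHS]/(ev2 (a - a') (b - b')) ev2B eq_ev2 subrr.
by move=> /subr0_eq-> /subr0_eq->.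
Qed.

Lemma inF_ev2 a b : inF (ev2 a b).
Proof. by exists a, b, 1; rewrite oner_neq0 rmorph1 divr1. Qed.

Lemma inF_E c : inF (E c).
Proof. by rewrite -ev2C; apply: inF_ev2. Qed.

Lemma inF_sub x y : inF x -> inF y -> inF (x - y).
Proof.
move=> [a [b [c [c0 ->]]]] [a' [b' [c' [c0' ->]]]].
exists (c' * a - c * a'), (c' * b - c * b'), (c * c'); rewrite mulf_neq0 //.
by split=> //; rewrite /ev2; field; rewrite !E_neq0.
Qed.

Lemma inF_mul x y : inF x -> inF y -> inF (x * y).
Proof.
move=> [a [b [c [c0 ->]]]] [a' [b' [c' [c0' ->]]]].
exists (a * a' + b * b' * W), (a * b' + a' * b), (c * c'); rewrite mulf_neq0 //.
by split=> //; rewrite -ev2M rmorphM; field; rewrite !E_neq0.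
Qed.

Lemma inF_inv x : inF x -> inF x^-1.
Proof.
move=> [a [b [c [c0 ->]]]].
have [->|ev2_neq0] := eqVneq (ev2 a b) 0; first by rewrite mul0r invr0 -(rmorph0 E); apply: inF_E.
have ev2N_neq0 : ev2 a (- b) != 0.
  apply: contra_neq ev2_neq0 => /ev2_eq0[-> /eqP].
  by rewrite oppr_eq0 => /eqP->; rewrite ev2C rmorph0.
exists (c * a), (c * - b), (a ^+ 2 - b ^+ 2 * W); split.
  by apply: contraTneq (mulf_neq0 ev2_neq0 ev2N_neq0) => N0; rewrite ev2_norm N0 rmorph0 eqxx.
rewrite -ev2_norm /ev2 !rmorphM.
by field; rewrite -rmorphN ev2N_neq0 ev2_neq0 E_neq0.
Qed.

(* [good a b] says that a + b w is a unit at a chosen place of F above t = r (its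
   residue is nonzero), and [Oloc good] is the valuation ring of that place. *)
Section Localisation.

Variable good : {poly k} -> {poly k} -> bool.
Hypothesis good_nroot : forall a b, good a b -> ~~ (root a r && root b r).
Hypothesis good_mul : forall a b a' b', good a b -> good a' b' ->
  good (a * a' + b * b' * W) (a * b' + a' * b).
Hypothesis good_const : forall c, c.[r] != 0 -> good c 0.

Definition Oloc z := exists a b a' b', good a' b' /\ z = ev2 a b / ev2 a' b'.

Lemma good_neq0 a b : good a b -> ev2 a b != 0.
Proof. by move/good_nroot/ev2_neq0. Qed.

Lemma Oloc_E c : Oloc (E c).
Proof.
exists c, 0, 1, 0; rewrite good_const ?hornerC ?oner_neq0 //.
by rewrite !ev2C rmorph1 divr1.
Qed.

Lemma Oloc_Einv c : c.[r] != 0 -> Oloc (E c)^-1.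
Proof. by move=> cr; exists 1, 0, c, 0; rewrite good_const // !ev2C rmorph1 div1r. Qed.

Lemma Oloc_inF z : Oloc z -> inF z.
Proof. by move=> [a [b [a' [b' [_ ->]]]]]; apply/inF_mul/inF_inv; apply: inF_ev2. Qed.

Lemma Oloc_const c : Oloc (iota c).
Proof. by rewrite -(evtC iota t); apply: Oloc_E. Qed.

Lemma Oloc_sub x y : Oloc x -> Oloc y -> Oloc (x - y).
Proof.
move=> [a [b [a1 [b1 [g1 ->]]]]] [a' [b' [a1' [b1' [g1' ->]]]]].
exists (a * a1' + b * b1' * W - (a' * a1 + b' * b1 * W)),
  (a * b1' + a1' * b - (a' * b1 + a1 * b')),
  (a1 * a1' + b1 * b1' * W), (a1 * b1' + a1' * b1); split; first exact: good_mul.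
have := good_neq0 g1; have := good_neq0 g1'.
by rewrite ev2B -!ev2M => *; field; apply/andP.
Qed.

Lemma Oloc_mul x y : Oloc x -> Oloc y -> Oloc (x * y).
Proof.
move=> [a [b [a1 [b1 [g1 ->]]]]] [a' [b' [a1' [b1' [g1' ->]]]]].
exists (a * a' + b * b' * W), (a * b' + a' * b),
  (a1 * a1' + b1 * b1' * W), (a1 * b1' + a1' * b1); split; first exact: good_mul.
have := good_neq0 g1; have := good_neq0 g1'.
by rewrite -!ev2M => *; field; apply/andP.
Qed.

Lemma pir_neq0 : pir != 0.
Proof. by rewrite E_neq0 ?polyXsubC_eq0. Qed.

Lemma pi_inv_notin_Oloc : ~ Oloc pir^-1.
Proof.
move=> [a [b [a' [b' [g eq_inv]]]]].
have defab : ev2 a b = pir^-1 * ev2 a' b' by rewrite eq_inv divfK // good_neq0.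
have : ev2 a' b' = ev2 (('X - r%:P) * a) (('X - r%:P) * b).
  transitivity (pir * ev2 a b); first by rewrite defab mulVKf ?pir_neq0.
  by rewrite /ev2 !rmorphM; ring.
move/ev2_inj=> [da db]; move/good_nroot: g.
by rewrite da db /root !hornerM hornerXsubC subrr !mul0r eqxx.
Qed.

Lemma Oloc_pir_exp n : Oloc (pir ^+ n).
Proof. by rewrite -rmorphXn; apply: Oloc_E. Qed.

Hypothesis good_factor : forall a b, ~~ (root a r && root b r) ->
  exists n e, [/\ Oloc e, Oloc e^-1, e != 0 & ev2 a b = pir ^+ n * e].

Lemma ev2_factor (a b : {poly k}) : (a != 0) || (b != 0) ->
  exists n e, [/\ Oloc e, Oloc e^-1, e != 0 & ev2 a b = pir ^+ n * e].
Proof.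
elim: {a b}(size a + size b).+1 {-2}a {-2}b (ltnSn (size a + size b)) => // N IHN a b ltN ab0.
case rab: (root a r && root b r); last by apply: good_factor; rewrite rab.
move/andP: rab => [/factor_theorem [a1 defa] /factor_theorem [b1 defb]].
have ab1 : (a1 != 0) || (b1 != 0).
  by move: ab0; rewrite defa defb !mulf_eq0 !negb_or => /orP[/andP[->]|/andP[->]]; rewrite ?orbT.
have lt_size (p p1 : {poly k}) : p = p1 * ('X - r%:P) ->
    (size p1 <= size p)%N /\ (p1 != 0 -> (size p1 < size p)%N).
  move=> ->; have [->|p10] := eqVneq p1 0; first by rewrite mul0r size_poly0.
  by rewrite size_mul ?polyXsubC_eq0 // size_XsubC addn2.
have [le_a lt_a] := lt_size _ _ defa; have [le_b lt_b] := lt_size _ _ defb.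
have ltN1 : (size a1 + size b1 < N)%N.
  move: ltN; rewrite ltnS; apply: leq_trans.
  by case/orP: ab1 => [/lt_a|/lt_b] lt; [rewrite -addSn | rewrite -addnS]; apply: leq_add.
have [n [e [Oe Oe' e0 defe]]] := IHN a1 b1 ltN1 ab1.
exists n.+1, e; split=> //.
by rewrite exprS -mulrA -defe defa defb /ev2 !rmorphM; ring.
Qed.

Lemma uniformizer_pir z : inF z -> z != 0 ->
  (Oloc z /\ Oloc z^-1) \/ Oloc (z / pir) \/ Oloc (z^-1 / pir).
Proof.
move=> [a [b [c [c0 defz]]]] z0.
have ab0 : (a != 0) || (b != 0).
  apply: contraNT z0; rewrite negb_or !negbK defz => /andP[/eqP-> /eqP->].
  by rewrite ev2C rmorph0 mul0r.
have [n [e [Oe Oe' e0 defe]]] := ev2_factor ab0.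
have [m [q /implyP /(_ c0) qr defc]] := multiplicity_XsubC c r.
have q0 : q != 0 by apply: contraNneq qr => ->; rewrite /root horner0.
set e' := e / E q.
have Oe1 : Oloc e' by apply: Oloc_mul => //; apply: Oloc_Einv.
have Oe1' : Oloc e'^-1 by rewrite invfM invrK; apply: Oloc_mul => //; apply: Oloc_E.
have e'0 : e' != 0 by rewrite mulf_neq0 ?invr_eq0 ?E_neq0.
have {}defz : z = pir ^+ n * e' / pir ^+ m.
  rewrite defz defe defc rmorphM rmorphXn /e'; field.
  by rewrite E_neq0 // expf_neq0 // pir_neq0.
have pir0 := pir_neq0.
case: (ltngtP n m) => [lt_nm|lt_mn|eq_nm].
- right; right; have -> : z^-1 / pir = pir ^+ (m - n).-1 * e'^-1.
    rewrite defz; set j := (m - n).-1.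
    have -> : m = (j.+1 + n)%N by rewrite /j prednK ?subn_gt0 // subnK // ltnW.
    by rewrite exprD exprS; field; rewrite e'0 -rmorphB pir0 !expf_neq0.
  exact/Oloc_mul/Oe1'/Oloc_pir_exp.
- right; left; have -> : z / pir = pir ^+ (n - m).-1 * e'.
    rewrite defz; set j := (n - m).-1.
    have -> : n = (j.+1 + m)%N by rewrite /j prednK ?subn_gt0 // subnK // ltnW.
    by rewrite exprD exprS; field; rewrite -rmorphB pir0 !expf_neq0.
  exact/Oloc_mul/Oe1/Oloc_pir_exp.
- by left; rewrite defz eq_nm mulrAC divff ?mul1r // expf_neq0.
Qed.

Variables (u : L) (H : {poly k}) (sigma : {rmorphism L -> L}).
Hypotheses (Hr : H.[r] != 0) (u_sqr : u ^+ 2 = pir * E H).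
Hypothesis decomp : forall z, exists a b, [/\ inF a, inF b & z = a + b * u].
Hypothesis decomp_uniq : forall a b, inF a -> inF b -> a + b * u = 0 -> a = 0 /\ b = 0.
Hypotheses (sigma_iota : forall c, sigma (iota c) = iota c) (sigma_t : sigma t = t).
Hypotheses (sigma_w : sigma w = w) (sigma_u : sigma u = - u).

Lemma sigma_inF z : inF z -> sigma z = z.
Proof.
by move=> [a [b [c [_ ->]]]]; rewrite /ev2 fmorph_div rmorphD rmorphM sigma_w !rmorph_evt.
Qed.

Theorem Oloc_fixes_geometric_point : fixes_geometric_point iota sigma.
Proof.
have H0 : H != 0 by apply: contraNneq Hr => ->; rewrite horner0.
apply: (ramified_quadratic_fixes_geometric_point inF_sub inF_mul inF_inv Oloc_inF Oloc_const
  Oloc_sub Oloc_mul (Oloc_E _) pi_inv_notin_Oloc uniformizer_pir (Oloc_E H)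
  (Oloc_Einv Hr) (E_neq0 H0) u_sqr decomp decomp_uniq).
by move=> a b Fa Fb; rewrite rmorphD rmorphM sigma_u !sigma_inF // mulrN.
Qed.

End Localisation.

Section SplitPlace.

Variable c0 : k.
Hypotheses (c0_neq0 : c0 != 0) (W_at_r : W.[r] = c0 ^+ 2) (two_neq0 : 2%:R != 0 :> k).

(* The place of F above t = r at which w takes the value c0. *)
Definition split_good a b := a.[r] + b.[r] * c0 != 0.

Lemma split_good_nroot a b : split_good a b -> ~~ (root a r && root b r).
Proof. by apply: contraNN => /andP[/eqP-> /eqP->]; rewrite mul0r addr0. Qed.

Lemma split_good_mul a b a' b' : split_good a b -> split_good a' b' ->
  split_good (a * a' + b * b' * W) (a * b' + a' * b).
Proof.
rewrite /split_good => g g'.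
have -> : (a * a' + b * b' * W).[r] + (a * b' + a' * b).[r] * c0 =
  (a.[r] + b.[r] * c0) * (a'.[r] + b'.[r] * c0) by rewrite !hornerE W_at_r; ring.
exact: mulf_neq0.
Qed.

Lemma split_good_const c : c.[r] != 0 -> split_good c 0.
Proof. by rewrite /split_good horner0 mul0r addr0. Qed.

Lemma split_good_factor a b : ~~ (root a r && root b r) ->
  exists n e, [/\ Oloc split_good e, Oloc split_good e^-1, e != 0 & ev2 a b = pir ^+ n * e].
Proof.
move=> nroot_ab.
have [g|ng] := boolP (split_good a b).
  exists 0%N, (ev2 a b); rewrite expr0 mul1r ev2_neq0 //; split=> //.
  - by exists a, b, 1, 0; rewrite split_good_const ?hornerC ?oner_neq0 // ev2C rmorph1 divr1.
  - by exists 1, 0, a, b; rewrite g ev2C rmorph1 div1r.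
(* Otherwise the conjugate a - b w is a unit, and a + b w is the norm a^2 - b^2 W,
   a power of t - r times a unit, divided by a - b w. *)
have gN : split_good a (- b).
  move: ng nroot_ab; rewrite /split_good negbK hornerN mulNr => /eqP sum0.
  apply: contraNN => /eqP diff0; have ar0 : a.[r] = 0.
    apply: (mulfI two_neq0); rewrite mulr0.
    transitivity ((a.[r] + b.[r] * c0) + (a.[r] - b.[r] * c0)); first by ring.
    by rewrite sum0 diff0 addr0.
  move: sum0; rewrite ar0 add0r => /eqP; rewrite mulf_eq0 (negbTE c0_neq0) orbF.
  by rewrite /root ar0 eqxx.
have evN_neq0 := ev2_neq0 (split_good_nroot gN).
set N := a ^+ 2 - b ^+ 2 * W.
have N0 : N != 0.
  apply: contraTneq (mulf_neq0 (ev2_neq0 nroot_ab) evN_neq0) => N0.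
  by rewrite ev2_norm -/N N0 rmorph0 eqxx.
have [m [q /implyP /(_ N0) qr defN]] := multiplicity_XsubC N r.
have q0 : q != 0 by apply: contraNneq qr => ->; rewrite /root horner0.
exists m, (E q / ev2 a (- b)); split.
- by exists q, 0, a, (- b); rewrite ev2C.
- by exists a, (- b), q, 0; rewrite split_good_const // invf_div ev2C.
- by rewrite mulf_neq0 ?invr_eq0 ?E_neq0.
- apply: (mulIf evN_neq0); rewrite ev2_norm -/N defN -mulrA divfK //.
  by rewrite rmorphM rmorphXn mulrC.
Qed.

End SplitPlace.

Section InertPlace.

Hypothesis W_nsqr : forall x : k, x ^+ 2 != W.[r].

(* Here the residue field of the place above t = r is k(sqrt W(r)). *)
Definition inert_good a b := ~~ (root a r && root b r).

Lemma inert_norm_neq0 a b : inert_good a b -> (a ^+ 2 - b ^+ 2 * W).[r] != 0.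
Proof.
rewrite /inert_good /root !hornerE => nroot_ab.
have [br0|br0] := eqVneq b.[r] 0.
  by move: nroot_ab; rewrite br0 eqxx andbT expr0n mul0r subr0 sqrf_eq0.
apply: contra_neq (W_nsqr (a.[r] / b.[r])) => N0.
rewrite expr_div_n -[a.[r] ^+ 2](subrK (b.[r] ^+ 2 * W.[r])) N0 add0r.
by rewrite [_ * W.[r]]mulrC mulfK // sqrf_eq0.
Qed.

Lemma inert_good_mul a b a' b' : inert_good a b -> inert_good a' b' ->
  inert_good (a * a' + b * b' * W) (a * b' + a' * b).
Proof.
move=> g; have := inert_norm_neq0 g; rewrite !hornerE => N0; move: g.
rewrite /inert_good /root !hornerE => g; apply: contraNN => /andP[/eqP re0 /eqP im0].
(* Multiplying by the conjugate a - b w scales the residue of a' + b' w by that of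
   the norm of a + b w, which is nonzero. *)
have /eqP : a'.[r] * (a.[r] ^+ 2 - b.[r] ^+ 2 * W.[r]) = 0.
  transitivity (a.[r] * (a.[r] * a'.[r] + b.[r] * b'.[r] * W.[r]) -
    b.[r] * W.[r] * (a.[r] * b'.[r] + a'.[r] * b.[r])); first ring.
  by rewrite re0 im0; ring.
have /eqP : b'.[r] * (a.[r] ^+ 2 - b.[r] ^+ 2 * W.[r]) = 0.
  transitivity (a.[r] * (a.[r] * b'.[r] + a'.[r] * b.[r]) -
    b.[r] * (a.[r] * a'.[r] + b.[r] * b'.[r] * W.[r])); first ring.
  by rewrite re0 im0; ring.
by rewrite !mulf_eq0 (negbTE N0) !orbF => -> ->.
Qed.

Lemma inert_good_const c : c.[r] != 0 -> inert_good c 0.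
Proof. by rewrite /inert_good /root => /negbTE->. Qed.

Lemma inert_good_factor a b : ~~ (root a r && root b r) ->
  exists n e, [/\ Oloc inert_good e, Oloc inert_good e^-1, e != 0 & ev2 a b = pir ^+ n * e].
Proof.
move=> g; exists 0%N, (ev2 a b); rewrite expr0 mul1r ev2_neq0 //; split=> //.
  by exists a, b, 1, 0; rewrite inert_good_const ?hornerC ?oner_neq0 // ev2C rmorph1 divr1.
have gN : inert_good a (- b) by rewrite /inert_good /root hornerN oppr_eq0.
exists a, (- b), (a ^+ 2 - b ^+ 2 * W), 0; rewrite inert_good_const ?inert_norm_neq0 //.
by rewrite ev2C -ev2_norm invfM mulrCA mulfV ?mulr1 ?ev2_neq0.
Qed.

End InertPlace.

Section RamifiedCover.

Variables (u : L) (H : {poly k}) (sigma : {rmorphism L -> L}).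
Hypotheses (two_neq0 : 2%:R != 0 :> k) (W_r_neq0 : W.[r] != 0).
Hypotheses (Hr : H.[r] != 0) (u_sqr : u ^+ 2 = pir * E H).
Hypothesis decomp : forall z, exists a b, [/\ inF a, inF b & z = a + b * u].
Hypothesis decomp_uniq : forall a b, inF a -> inF b -> a + b * u = 0 -> a = 0 /\ b = 0.
Hypotheses (sigma_iota : forall c, sigma (iota c) = iota c) (sigma_t : sigma t = t).
Hypotheses (sigma_w : sigma w = w) (sigma_u : sigma u = - u).

Theorem ramified_fixes_geometric_point : fixes_geometric_point iota sigma.
Proof.
have [[c0 c0_sqr]|W_nsqr] := classic (exists c0, c0 ^+ 2 = W.[r]).
  have c0_neq0 : c0 != 0.
    by apply: contraNneq W_r_neq0 => c00; rewrite -c0_sqr c00 expr2 mul0r.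
  apply: (Oloc_fixes_geometric_point (good := split_good c0) _ _ _ _ Hr u_sqr
    decomp decomp_uniq sigma_iota sigma_t sigma_w sigma_u).
  - exact: split_good_nroot.
  - by move=> a b a' b'; apply: split_good_mul.
  - exact: split_good_const.
  - exact: split_good_factor.
have {}W_nsqr x : x ^+ 2 != W.[r] by apply/eqP => sq; apply: W_nsqr; exists x.
apply: (Oloc_fixes_geometric_point (good := inert_good) _ _ _ _ Hr u_sqr
  decomp decomp_uniq sigma_iota sigma_t sigma_w sigma_u).
- by [].
- by move=> a b a' b'; apply: inert_good_mul.
- exact: inert_good_const.
- exact: inert_good_factor.
Qed.

End RamifiedCover.

End QuadraticPlace.

Record quad (k : fieldType) := Quad { qa : {poly k}; qb : {poly k}; qc : {poly k}; qd : {poly k} }.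

Section Biquadratic.

Variables (k L : fieldType) (iota : {rmorphism k -> L}) (P Q : {poly k}) (t u v : L).
Local Notation E := (evt iota t).
Hypothesis E_neq0 : forall p, p != 0 -> E p != 0.
Hypotheses (u_sqr : u ^+ 2 = t * E P) (v_sqr : v ^+ 2 = t * E Q).
Hypothesis norm_eq0 : forall a b c d,
  biquad_norm P Q a b c d = 0 -> [/\ a = 0, b = 0, c = 0 & d = 0].
Hypothesis L_gen : forall S : L -> Prop,
  (forall c : k, S (iota c)) -> S t -> S u -> S v ->
  (forall a b, S a -> S b -> S (a - b)) ->
  (forall a b, S a -> S b -> S (a * b)) ->
  (forall a, S a -> S a^-1) ->
  forall a, S a.

Lemma rmorph_eq_on_generators (f g : {rmorphism L -> L}) :
  (forall c, f (iota c) = g (iota c)) -> f t = g t -> f u = g u -> f v = g v -> f =1 g.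
Proof.
move=> fg_iota fg_t fg_u fg_v; apply: L_gen => // [a b|a b|a].
- by rewrite !rmorphB => -> ->.
- by rewrite !rmorphM => -> ->.
- by rewrite !fmorphV => ->.
Qed.

Definition ev4 (x : quad k) := E (qa x) + E (qb x) * u + E (qc x) * v + E (qd x) * (u * v).

Definition qmul (x y : quad k) :=
  let: Quad a b c d := x in let: Quad a' b' c' d' := y in
  Quad (a * a' + b * b' * ('X * P) + c * c' * ('X * Q) + d * d' * ('X * P) * ('X * Q))
       (a * b' + b * a' + (c * d' + d * c') * ('X * Q))
       (a * c' + c * a' + (b * d' + d * b') * ('X * P))
       (a * d' + d * a' + b * c' + c * b').
Definition qsub (x y : quad k) := Quad (qa x - qa y) (qb x - qb y) (qc x - qc y) (qd x - qd y).
Definition qscale (c : {poly k}) (x : quad k) := Quad (c * qa x) (c * qb x) (c * qc x) (c * qd x).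

Lemma ev4M x y : ev4 (qmul x y) = ev4 x * ev4 y.
Proof.
case: x y => a b c d [a' b' c' d'].
have tX : E 'X = t by apply: evtX.
rewrite /ev4 /= !(rmorphD, rmorphM) tX.
apply/eqP; rewrite -subr_eq0; apply/eqP.
transitivity
  ((u ^+ 2 - t * E P) * (- (E b * E b' + (E b * E d' + E d * E b') * v) - E d * E d' * v ^+ 2)
  + (v ^+ 2 - t * E Q) * (- (E c * E c' + (E c * E d' + E d * E c') * u) - E d * E d' * t * E P)).
  by ring.
by rewrite u_sqr v_sqr !subrr !mul0r addr0.
Qed.

Lemma ev4B x y : ev4 (qsub x y) = ev4 x - ev4 y.
Proof. by rewrite /ev4 /= !rmorphB; ring. Qed.

Lemma ev4Z c x : ev4 (qscale c x) = E c * ev4 x.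
Proof. by rewrite /ev4 /= !rmorphM; ring. Qed.

Definition norm_cofactor (x : quad k) :=
  let: Quad a b c d := x in
  qmul (Quad a b (- c) (- d)) (Quad (biquad_normA P Q a b c d) (- biquad_normB Q a b c d) 0 0).

Lemma ev4_norm x :
  ev4 x * ev4 (norm_cofactor x) = E (biquad_norm P Q (qa x) (qb x) (qc x) (qd x)).
Proof.
case: x => a b c d; rewrite /norm_cofactor ev4M mulrA -!ev4M.
have -> : E (biquad_norm P Q a b c d) = ev4 (Quad (biquad_norm P Q a b c d) 0 0 0).
  by rewrite /ev4 /= rmorph0 !mul0r !addr0.
by congr ev4; rewrite /= /biquad_norm /biquad_normA /biquad_normB; congr Quad; ring.
Qed.

Lemma ev4_eq0 a b c d : ev4 (Quad a b c d) = 0 -> [/\ a = 0, b = 0, c = 0 & d = 0].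
Proof.
move=> x0; have [N0|/E_neq0] := eqVneq (biquad_norm P Q a b c d) 0; first exact: norm_eq0.
by rewrite -(ev4_norm (Quad a b c d)) x0 mul0r eqxx.
Qed.

Lemma ev4_inj : injective ev4.
Proof.
case=> a b c d [a' b' c' d'] eq_xy.
have := ev4B (Quad a b c d) (Quad a' b' c' d'); rewrite eq_xy subrr /qsub /=.
by case/ev4_eq0=> /subr0_eq-> /subr0_eq-> /subr0_eq-> /subr0_eq->.
Qed.

Lemma ev4_const p : ev4 (Quad p 0 0 0) = E p.
Proof. by rewrite /ev4 /= rmorph0 !mul0r !addr0. Qed.

Definition quad_repr z (xc : quad k * {poly k}) := xc.2 != 0 /\ z = ev4 xc.1 / E xc.2.

Lemma quad_repr_ev4 x : quad_repr (ev4 x) (x, 1).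
Proof. by rewrite /quad_repr rmorph1 divr1 oner_neq0. Qed.

Lemma quad_repr_exists z : exists xc, quad_repr z xc.
Proof.
have repr_ev4 y x : y = ev4 x -> quad_repr y (x, 1) by move=> ->; apply: quad_repr_ev4.
move: z; apply: L_gen.
- by move=> c; exists (Quad c%:P 0 0 0, 1); apply: repr_ev4; rewrite /ev4 /= evtC !rmorph0; ring.
- by exists (Quad 'X 0 0 0, 1); apply: repr_ev4; rewrite /ev4 /= evtX !rmorph0; ring.
- by exists (Quad 0 1 0 0, 1); apply: repr_ev4; rewrite /ev4 /= !rmorph0 rmorph1; ring.
- by exists (Quad 0 0 1 0, 1); apply: repr_ev4; rewrite /ev4 /= !rmorph0 rmorph1; ring.
- move=> a b [[x c] [/= c0 ->]] [[y d] [/= d0 ->]].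
  exists (qsub (qscale d x) (qscale c y), c * d); split; first by rewrite /= mulf_neq0.
  by rewrite /= ev4B !ev4Z rmorphM; field; rewrite !E_neq0.
- move=> a b [[x c] [/= c0 ->]] [[y d] [/= d0 ->]].
  exists (qmul x y, c * d); split; first by rewrite /= mulf_neq0.
  by rewrite /= ev4M rmorphM; field; rewrite !E_neq0.
- move=> a [[x c] [/= c0 ->]].
  have [x0|x_neq0] := eqVneq (ev4 x) 0.
    by exists (x, 1); apply: repr_ev4; rewrite x0 mul0r invr0.
  pose N := biquad_norm P Q (qa x) (qb x) (qc x) (qd x).
  have N_neq0 : N != 0.
    apply: contra_neq x_neq0 => /norm_eq0[qa0 qb0 qc0 qd0].
    by rewrite /ev4 qa0 qb0 qc0 qd0 !rmorph0; ring.
  have cof_neq0 : ev4 (norm_cofactor x) != 0.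
    by apply: contraNneq (E_neq0 N_neq0) => cof0; rewrite -ev4_norm cof0 mulr0.
  exists (qscale c (norm_cofactor x), N); split=> //=.
  by rewrite ev4Z /N -ev4_norm invf_div; field; rewrite x_neq0 cof_neq0.
Qed.

Definition qconj (s1 s2 : bool) (x : quad k) :=
  let sgn (b : bool) : {poly k} := if b then -1 else 1 in
  Quad (qa x) (sgn s1 * qb x) (sgn s2 * qc x) (sgn s1 * sgn s2 * qd x).

Lemma qconjZ s1 s2 c x : qconj s1 s2 (qscale c x) = qscale c (qconj s1 s2 x).
Proof. by congr Quad; rewrite /=; ring. Qed.

Lemma qconjB s1 s2 x y : qconj s1 s2 (qsub x y) = qsub (qconj s1 s2 x) (qconj s1 s2 y).
Proof. by congr Quad; rewrite /=; ring. Qed.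

Lemma qconjM s1 s2 x y : qconj s1 s2 (qmul x y) = qmul (qconj s1 s2 x) (qconj s1 s2 y).
Proof. by case: x y s1 s2 => a b c d [a' b' c' d'] [] []; congr Quad; rewrite /=; ring. Qed.

Definition biquad_conj_fun s1 s2 z :=
  let xc := proj1_sig (constructive_indefinite_description _ (quad_repr_exists z)) in
  ev4 (qconj s1 s2 xc.1) / E xc.2.

Lemma biquad_conj_div s1 s2 x c :
  c != 0 -> biquad_conj_fun s1 s2 (ev4 x / E c) = ev4 (qconj s1 s2 x) / E c.
Proof.
move=> c0; rewrite /biquad_conj_fun; case: constructive_indefinite_description.
move=> -[x' c'] [/= c'0 eq_repr]; have Ec0 := E_neq0 c0; have Ec'0 := E_neq0 c'0.
have : qscale c' x = qscale c x'.
  apply: ev4_inj; rewrite !ev4Z.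
  transitivity (E c * E c' * (ev4 x / E c)); first by field; rewrite ?Ec0 ?Ec'0.
  by rewrite eq_repr; field; rewrite ?Ec0 ?Ec'0.
move=> /(congr1 (fun y => ev4 (qconj s1 s2 y))); rewrite !qconjZ !ev4Z => eq_conj.
transitivity (E c * ev4 (qconj s1 s2 x') / (E c * E c')); first by field; rewrite ?Ec0 ?Ec'0.
by rewrite -eq_conj; field; rewrite ?Ec0 ?Ec'0.
Qed.

Lemma biquad_conj_ev4 s1 s2 x : biquad_conj_fun s1 s2 (ev4 x) = ev4 (qconj s1 s2 x).
Proof. by have := biquad_conj_div s1 s2 x (oner_neq0 _); rewrite rmorph1 !divr1. Qed.

Lemma biquad_conj_fun_const s1 s2 p : biquad_conj_fun s1 s2 (E p) = E p.
Proof. by rewrite -ev4_const biquad_conj_ev4; congr ev4; congr Quad; rewrite /=; ring. Qed.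

Lemma biquad_conj_is_zmod_morphism s1 s2 : zmod_morphism (biquad_conj_fun s1 s2).
Proof.
move=> a b; have [[x c] [/= c0 ->]] := quad_repr_exists a.
have [[y d] [/= d0 ->]] := quad_repr_exists b.
have Ec0 := E_neq0 c0; have Ed0 := E_neq0 d0.
have -> : ev4 x / E c - ev4 y / E d = ev4 (qsub (qscale d x) (qscale c y)) / E (c * d).
  by rewrite ev4B !ev4Z rmorphM; field; rewrite Ec0 Ed0.
rewrite !biquad_conj_div ?mulf_neq0 // qconjB !qconjZ ev4B !ev4Z rmorphM.
by field; rewrite Ec0 Ed0.
Qed.

Lemma biquad_conj_is_monoid_morphism s1 s2 : monoid_morphism (biquad_conj_fun s1 s2).
Proof.
split=> [|a b]; first by rewrite -(rmorph1 E) biquad_conj_fun_const.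
have [[x c] [/= c0 ->]] := quad_repr_exists a.
have [[y d] [/= d0 ->]] := quad_repr_exists b.
have Ec0 := E_neq0 c0; have Ed0 := E_neq0 d0.
have -> : ev4 x / E c * (ev4 y / E d) = ev4 (qmul x y) / E (c * d).
  by rewrite ev4M rmorphM; field; rewrite Ec0 Ed0.
rewrite !biquad_conj_div ?mulf_neq0 // qconjM ev4M rmorphM.
by field; rewrite Ec0 Ed0.
Qed.

HB.instance Definition _ s1 s2 :=
  GRing.isZmodMorphism.Build L L (biquad_conj_fun s1 s2) (biquad_conj_is_zmod_morphism s1 s2).
HB.instance Definition _ s1 s2 :=
  GRing.isMonoidMorphism.Build L L (biquad_conj_fun s1 s2) (biquad_conj_is_monoid_morphism s1 s2).

Definition biquad_conj s1 s2 : {rmorphism L -> L} := biquad_conj_fun s1 s2.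

Lemma biquad_conj_const s1 s2 p : biquad_conj s1 s2 (E p) = E p.
Proof. exact: biquad_conj_fun_const. Qed.

Lemma biquad_conj_iota s1 s2 c : biquad_conj s1 s2 (iota c) = iota c.
Proof. by rewrite -(evtC iota t) biquad_conj_const. Qed.

Lemma biquad_conj_t s1 s2 : biquad_conj s1 s2 t = t.
Proof. by rewrite -(evtX iota t) biquad_conj_const. Qed.

Lemma biquad_conj_u s1 s2 : biquad_conj s1 s2 u = if s1 then - u else u.
Proof.
have -> : u = ev4 (Quad 0 1 0 0) by rewrite /ev4 /= !rmorph0 rmorph1; ring.
by rewrite /= biquad_conj_ev4 /ev4 /=; case: s1; rewrite !(rmorph0, rmorphN, rmorph1, mulr0); ring.
Qed.

Lemma biquad_conj_v s1 s2 : biquad_conj s1 s2 v = if s2 then - v else v.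
Proof.
have -> : v = ev4 (Quad 0 0 1 0) by rewrite /ev4 /= !rmorph0 rmorph1; ring.
by rewrite /= biquad_conj_ev4 /ev4 /=; case: s2; rewrite !(rmorph0, rmorphN, rmorph1, mulr0); ring.
Qed.

Hypotheses (two_neq0 : 2%:R != 0 :> k) (P0 : P.[0] != 0) (Q0 : Q.[0] != 0).

Let P_neq0 : P != 0. Proof. by apply: contraNneq P0 => ->; rewrite horner0. Qed.
Let t_neq0 : t != 0. Proof. by rewrite -(evtX iota t) E_neq0 ?polyX_eq0. Qed.

Let u_neq0 : u != 0.
Proof. by rewrite -sqrf_eq0 u_sqr mulf_neq0 ?E_neq0. Qed.

Let v_neq0 : v != 0.
Proof.
have Q_neq0 : Q != 0 by apply: contraNneq Q0 => ->; rewrite horner0.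
by rewrite -sqrf_eq0 v_sqr mulf_neq0 ?E_neq0.
Qed.

Lemma biquad_conj_comp s1 s2 s1' s2' z :
  biquad_conj s1 s2 (biquad_conj s1' s2' z) = biquad_conj (s1 (+) s1') (s2 (+) s2') z.
Proof.
move: z; apply: (rmorph_eq_on_generators (f := biquad_conj s1 s2 \o biquad_conj s1' s2'))
  => [c|||] /=; rewrite ?biquad_conj_iota ?biquad_conj_t //.
  rewrite !biquad_conj_u; case: s1' => /=; rewrite ?rmorphN biquad_conj_u;
    by case: s1; rewrite ?opprK.
rewrite !biquad_conj_v; case: s2' => /=; rewrite ?rmorphN biquad_conj_v;
  by case: s2; rewrite ?opprK.
Qed.

Lemma biquad_conj_id : biquad_conj false false =1 id.
Proof.
apply: (rmorph_eq_on_generators (g := idfun)) => [c|||] /=;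
  by rewrite ?biquad_conj_iota ?biquad_conj_t ?biquad_conj_u ?biquad_conj_v.
Qed.

Lemma biquad_conjK s1 s2 : involutive (biquad_conj s1 s2).
Proof. by move=> z; rewrite biquad_conj_comp !addbb biquad_conj_id. Qed.

Lemma biquad_conj_neq_id s1 s2 : s1 || s2 -> ~ (biquad_conj s1 s2 =1 id).
Proof.
have neg_neq (x : L) : x != 0 -> - x != x.
  move=> x0; rewrite eq_sym -subr_eq0 opprK -mulr2n -mulr_natl mulf_neq0 //.
  by rewrite -(rmorph_nat iota) fmorph_eq0.
case: s1 => /= [_ /(_ u)|->// /(_ v)]; rewrite ?biquad_conj_u ?biquad_conj_v.
  by apply/eqP; apply: neg_neq.
by apply/eqP; apply: neg_neq.
Qed.

Lemma biquad_conj_klein :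
  let e1 := biquad_conj true false in let e2 := biquad_conj false true in
  [/\ [/\ bijective e1, bijective e2
        & forall c, e1 (iota c) = iota c /\ e2 (iota c) = iota c],
      [/\ e1 t = t, e1 u = - u & e1 v = v],
      [/\ e2 t = t, e2 u = u & e2 v = - v]
    & [/\ [/\ e1 \o e1 =1 id, e2 \o e2 =1 id & e1 \o e2 =1 e2 \o e1]
        & [/\ ~ (e1 =1 id), ~ (e2 =1 id) & ~ (e1 \o e2 =1 id)]]].
Proof.
rewrite /= !biquad_conj_t !biquad_conj_u !biquad_conj_v; split=> //.
- split; last by move=> c; rewrite !biquad_conj_iota.
    by exists (biquad_conj true false); apply: biquad_conjK.
  by exists (biquad_conj false true); apply: biquad_conjK.
- split; split; [exact: biquad_conjK | exact: biquad_conjK | | exact: biquad_conj_neq_id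
    | exact: biquad_conj_neq_id | ].
  + by move=> z; rewrite /= !biquad_conj_comp.
  + move=> e12_id; apply: (@biquad_conj_neq_id true true) => // z.
    by rewrite -(biquad_conj_comp true false false true); apply: e12_id.
Qed.

Let X_neq0 : 'X != 0 :> {poly k}. Proof. by rewrite polyX_eq0. Qed.

Let mulIP (p q : {poly k}) : p != 0 -> p * q = 0 -> q = 0.
Proof. by move=> p0 /eqP; rewrite mulf_eq0 (negbTE p0) => /eqP. Qed.

(* The fixed field of sigma is k(t, v), over which u ramifies above t = x1. *)
Lemma negating_u_fixes_geometric_point (x1 : k) (sigma : {rmorphism L -> L}) :
  separable_poly P -> root P x1 -> Q.[x1] != 0 ->
  (forall c, sigma (iota c) = iota c) -> sigma t = t -> sigma u = - u -> sigma v = v ->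
  fixes_geometric_point iota sigma.
Proof.
move=> sepP rootP Qx1 sigma_iota sigma_t sigma_u sigma_v.
have [P1 defP P1x1] := separable_root_factor sepP rootP.
have x1_neq0 : x1 != 0 by apply: contraTneq rootP => ->; rewrite /root (negbTE P0).
have v_sqr' : v ^+ 2 = E ('X * Q) by rewrite rmorphM evtX.
have indep_v a b : E a + E b * v = 0 -> a = 0 /\ b = 0.
  move=> ab0; have /ev4_eq0[-> _ -> _] // : ev4 (Quad a 0 b 0) = 0.
  by rewrite -ab0 /ev4 /= rmorph0; ring.
apply: (ramified_fixes_geometric_point (r := x1) (H := 'X * P1) E_neq0 v_sqr' indep_v
  two_neq0 _ _ _ _ _ sigma_iota sigma_t sigma_v sigma_u).
- by rewrite hornerM hornerX mulf_neq0.
- by rewrite hornerM hornerX mulf_neq0.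
- by rewrite u_sqr defP !rmorphM evtX; ring.
- move=> z; have [[[a b c d] e] [/= e0 ->]] := quad_repr_exists z.
  exists (ev2 iota t v a c / E e), (ev2 iota t v b d / E e); split.
  + by exists a, c, e.
  + by exists b, d, e.
  + by rewrite /ev4 /ev2 /=; field; rewrite E_neq0.
- move=> x y [a [b [c [c0 ->]]]] [a' [b' [c' [c'0 ->]]]] sum0.
  have /ev4_eq0[] : ev4 (Quad (c' * a) (c * a') (c' * b) (c * b')) = 0.
    transitivity (E c * E c' * (ev2 iota t v a b / E c + ev2 iota t v a' b' / E c' * u)).
      by rewrite /ev4 /ev2 /= !rmorphM; field; rewrite !E_neq0.
    by rewrite sum0 mulr0.
  move=> /(mulIP c'0) a0 /(mulIP c0) a'0 /(mulIP c'0) b0 /(mulIP c0) b'0.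
  by rewrite a0 a'0 b0 b'0 ev2C rmorph0 !mul0r.
Qed.

(* The fixed field of sigma is k(t, w) with w = u v / t and w ^+ 2 = P Q; u ramifies
   above t = 0. *)
Lemma negating_uv_fixes_geometric_point (sigma : {rmorphism L -> L}) :
  (forall c, sigma (iota c) = iota c) -> sigma t = t -> sigma u = - u -> sigma v = - v ->
  fixes_geometric_point iota sigma.
Proof.
move=> sigma_iota sigma_t sigma_u sigma_v.
have EP0 : E P != 0 by apply: E_neq0.
set w := u * v / t.
have w_sqr : w ^+ 2 = E (P * Q).
  by rewrite /w expr_div_n exprMn u_sqr v_sqr rmorphM; field.
have indep_w a b : E a + E b * w = 0 -> a = 0 /\ b = 0.
  move=> ab0; have /ev4_eq0[/(mulIP X_neq0) -> _ _ ->] // : ev4 (Quad ('X * a) 0 0 b) = 0.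
  transitivity (t * (E a + E b * w)); last by rewrite ab0 mulr0.
  by rewrite /ev4 /w /= rmorph0 rmorphM evtX; field.
apply: (ramified_fixes_geometric_point (r := 0) (H := P) E_neq0 w_sqr indep_w
  two_neq0 _ P0 _ _ _ sigma_iota sigma_t _ sigma_u).
- by rewrite hornerM mulf_neq0.
- by rewrite u_sqr subr0 evtX.
- move=> z; have [[[a b c d] e] [/= e0 ->]] := quad_repr_exists z.
  exists (ev2 iota t w a ('X * d) / E e), (ev2 iota t w (b * P) c / E (e * P)); split.
  + by exists a, ('X * d), e.
  + by exists (b * P), c, (e * P); rewrite mulf_neq0.
  + apply/eqP; rewrite -subr_eq0; apply/eqP.
    transitivity (- (E c * v * (u ^+ 2 - t * E P)) / (t * E e * E P)).
      by rewrite /ev4 /ev2 /w /= !rmorphM evtX; field; rewrite t_neq0 EP0 E_neq0.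
    by rewrite u_sqr subrr mulr0 oppr0 mul0r.
- move=> x y [a [b [c [c0 ->]]]] [a' [b' [c' [c'0 ->]]]] sum0.
  have /ev4_eq0[] : ev4 (Quad ('X * c' * a) ('X * c * a') ('X * c * P * b') (c' * b)) = 0.
    transitivity (t * E c * E c' * (ev2 iota t w a b / E c + ev2 iota t w a' b' / E c' * u)
      - E c * E b' * v * (u ^+ 2 - t * E P)).
      by rewrite /ev4 /ev2 /w /= !rmorphM evtX; field; rewrite t_neq0 !E_neq0.
    by rewrite sum0 u_sqr !subrr !mulr0 subrr.
  move=> /(mulIP (mulf_neq0 X_neq0 c'0)) a0 /(mulIP (mulf_neq0 X_neq0 c0)) a'0.
  move=> /(mulIP (mulf_neq0 (mulf_neq0 X_neq0 c0) P_neq0)) b'0 /(mulIP c'0) b0.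
  by rewrite a0 a'0 b0 b'0 ev2C rmorph0 !mul0r.
- by rewrite /w fmorph_div rmorphM sigma_u sigma_v sigma_t mulrNN.
Qed.


End Biquadratic.

Theorem proposition8p2
  (k : fieldType) (char0 : [pchar k] =i pred0)
  (P Q : {poly k})
  (sepP : separable_poly P) (sepQ : separable_poly Q)
  (degP : (1 < size P)%N) (degQ : (1 < size Q)%N)
  (copPQ : coprimep P Q)
  (P0 : P.[0] != 0) (Q0 : Q.[0] != 0)
  (x1 : k) (rootP : root P x1) (sq1 : exists c : k, c != 0 /\ x1 * Q.[x1] = c ^+ 2)
  (x2 : k) (rootQ : root Q x2) (sq2 : exists c : k, c != 0 /\ x2 * P.[x2] = c ^+ 2)
  (* L = k(x)(sqrt(x P(x)), sqrt(x Q(x))), given by generators t = x, u, v *)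
  (L : fieldType) (iota : {rmorphism k -> L}) (t u v : L)
  (t_transc : forall p : {poly k}, p != 0 -> (map_poly iota p).[t] != 0)
  (u_sq : u ^+ 2 = t * (map_poly iota P).[t])
  (v_sq : v ^+ 2 = t * (map_poly iota Q).[t])
  (L_gen : forall S : L -> Prop,
      (forall c : k, S (iota c)) -> S t -> S u -> S v ->
      (forall a b, S a -> S b -> S (a - b)) ->
      (forall a b, S a -> S b -> S (a * b)) ->
      (forall a, S a -> S a^-1) ->
      forall a, S a) :
  exists e1 e2 : {rmorphism L -> L},
    [/\ [/\ bijective e1, bijective e2
          & (forall c : k, e1 (iota c) = iota c /\ e2 (iota c) = iota c)],
        [/\ e1 t = t, e1 u = - u & e1 v = v],
        [/\ e2 t = t, e2 u = u & e2 v = - v],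
        (* relations of G = (Z/2Z)^2 and faithfulness of the action *)
        [/\ [/\ e1 \o e1 =1 id, e2 \o e2 =1 id & e1 \o e2 =1 e2 \o e1]
          & [/\ ~ (e1 =1 id), ~ (e2 =1 id) & ~ (e1 \o e2 =1 id)]]
      & (* every element of G fixes a geometric point of X *)
        [/\ fixes_geometric_point iota id,
            fixes_geometric_point iota e1,
            fixes_geometric_point iota e2
          & fixes_geometric_point iota (e1 \o e2)]].
Proof.
have two_neq0 : 2%:R != 0 :> k.
  by apply/negP => /(natf0_pchar (isT : (0 < 2)%N)) [p]; rewrite char0.
have Qx1 : Q.[x1] != 0 by apply: coprimep_root rootP.
have Px2 : P.[x2] != 0 by apply: coprimep_root rootQ; rewrite coprimep_sym.
have normPQ := biquad_norm_eq0 two_neq0 P0 Q0 sepP rootP Qx1.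
have normQP := biquad_norm_eq0 two_neq0 Q0 P0 sepQ rootQ Px2.
have L_gen' S Sc St Sv Su := L_gen S Sc St Su Sv.
have [group e1_act e2_act klein] :=
  biquad_conj_klein t_transc u_sq v_sq normPQ L_gen two_neq0 P0 Q0.
set e1 := biquad_conj _ _ _ _ _ true false in group e1_act klein *.
set e2 := biquad_conj _ _ _ _ _ false true in group e2_act klein *.
have [[_ _ e_iota] [e1_t e1_u e1_v] [e2_t e2_u e2_v]] := And3 group e1_act e2_act.
have fix_e1 : fixes_geometric_point iota e1.
  apply: (negating_u_fixes_geometric_point t_transc u_sq v_sq normPQ L_gen two_neq0 P0
    sepP rootP Qx1) => // c; exact: (e_iota c).1.
exists e1, e2; split=> //; split.
- exact: fixes_geometric_point_id fix_e1.
- exact: fix_e1.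
- apply: (negating_u_fixes_geometric_point t_transc v_sq u_sq normQP L_gen' two_neq0 Q0
    sepQ rootQ Px2) => // c; exact: (e_iota c).2.
- apply: (negating_uv_fixes_geometric_point t_transc u_sq v_sq normPQ L_gen two_neq0 P0 Q0)
    => [c|||] /=; rewrite ?(e1_t, e2_t, e1_u, e2_u, e1_v, e2_v, rmorphN) //.
  by have [e1_c ->] := e_iota c.
Qed.
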